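(* Let $\{x^k\}$ be generated by the Deterministic Asynchronous PALM algorithm and assume (A3). Then for every $k\in\mathbb N$, $$\Phi(z^{k+1})+\frac12\Big(\frac1{\gamma^k_{j_k}}-L_{j_k}(x^k_{-j_k})-2M\sqrt{\rho_\tau\tau}\Big)\|x^{k+1}_{j_k}-x^k_{j_k}\|^2\le\Phi(z^k).$$ In particular $\Psi(x^k)\le\Phi(z^k)$ and $\Phi(z^0)=\Psi(x^0)$.
   Context: Let $\mathcal H=\mathcal H_1\times\cdots\times\mathcal H_m$ be a product of finite-dimensional real Euclidean spaces with $\langle x,y\rangle=\sum_j\langle x_j,y_j\rangle$. For $x\in\mathcal H$, $x_{-j}$ denotes $x$ with its $j$th block removed and $(x_{-j};y)$ the point with $j$th block replaced by $y\in\mathcal H_j$. Let $f:\mathcal H\to\mathbb R$ be $C^1$, $r_j:\mathcal H_j\to(-\infty,\infty]$ proper lower semicontinuous, $r(x)=\sum_jr_j(x_j)$, $\Psi=f+r$ bounded below. $r$ is prox-bounded: there is $\lambda_r>0$ with $\operatorname{argmin}_y\{r(y)+\frac1{2\lambda}\|x-y\|^2\}\ne\emptyset$ for all $x$ and $0<\lambda\le\lambda_r$. For each $j$ there is $L_j:\mathcal H_{-j}\to(0,\infty)$ such that $y\mapsto\nabla_jf(x_{-j};y)$ is $L_j(x_{-j})$-Lipschitz for every $x$. Delays: an integer $\tau\ge1$ and $d_k\in\{0,\dots,\tau\}^m$; $x^{k-d_k}:=(x_1^{k-d_{k,1}},\dots,x_m^{k-d_{k,m}})$, with $x^i_j=x^0_j$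 for $i\le0$. Deterministic Asynchronous PALM: choose $x^0$, $c\in(0,1)$, $M>0$, indices $j_k\in\{1,\dots,m\}$; let $\rho_\tau:=\sup_{j,k}|\{h:k-\tau\le h\le k,\ j_h=j\}|$. For each $k$ set $\gamma^k_j=\min\{c(L_j(x^{k-d_k}_{-j})+2M\sqrt{\rho_\tau\tau})^{-1},\lambda_r\}$, choose $x^{k+1}_{j_k}\in\operatorname{argmin}_{u\in\mathcal H_{j_k}}\{r_{j_k}(u)+\langle\nabla_{j_k}f(x^{k-d_k}),u-x^k_{j_k}\rangle+\frac1{2\gamma^k_{j_k}}\|u-x^k_{j_k}\|^2\}$, and $x^{k+1}_j=x^k_j$ for $j\ne j_k$. (A3): $\|\nabla_{j_k}f(x^k)-\nabla_{j_k}f(x^{k-d_k})\|\le M\|x^k-x^{k-d_k}\|$ for all $k$. Lyapunov function $\Phi:\mathcal H^{1+\tau}\to(-\infty,\infty]$: $\Phi(x(0),\dots,x(\tau))=f(x(0))+r(x(0))+\frac{M\sqrt{\rho_\tau}}{2\sqrt\tau}\sum_{h=1}^\tau(\tau-h+1)\|x(h)-x(h-1)\|^2$, and $z^k:=(x^k,x^{k-1},\dots,x^{k-\tau})$ with $x^i:=x^0$ for $i<0$. *)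

From mathcomp Require Import all_boot.
From Stdlib Require Import Reals.
Set Implicit Arguments. Unset Strict Implicit. Unset Printing Implicit Defensive.
Open Scope R_scope.

Definition vec (d : nat) := 'I_d -> R.
Definition vsub (d : nat) (u v : vec d) : vec d := fun i => u i - v i.
Definition vinner (d : nat) (u v : vec d) : R := \big[Rplus/R0]_(i < d) (u i * v i).
Definition vnorm (d : nat) (u : vec d) : R := sqrt (vinner u u).

Definition prodsp (m : nat) (n : 'I_m -> nat) := forall j : 'I_m, vec (n j).
Arguments prodsp : clear implicits.
Definition hadd m n (x y : prodsp m n) : prodsp m n := fun j i => x j i + y j i.
Definition hsub m n (x y : prodsp m n) : prodsp m n := fun j i => x j i - y j i.
Definition hinner m n (x y : prodsp m n) : R :=
  \big[Rplus/R0]_(j < m) vinner (x j) (y j).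
Definition hnorm m n (x : prodsp m n) : R := sqrt (hinner x x).

(** (x_{-j}; y): replace block j of x by y. *)
Definition upd m n (x : prodsp m n) (j : 'I_m) (y : vec (n j)) : prodsp m n :=
  fun j' => match j =P j' with
            | ReflectT e => eq_rect j (fun t => vec (n t)) y j' e
            | ReflectF _ => x j'
            end.

Arguments upd {m n} x j y.

(** Extended reals (-oo excluded): None stands for +oo. *)
Definition ereal := option R.
Definition eadd (a b : ereal) : ereal :=
  match a, b with Some x, Some y => Some (x + y) | _, _ => None end.
Definition ele (a b : ereal) : Prop :=
  match a, b with
  | _, None => True
  | None, Some _ => False
  | Some x, Some y => x <= y
  end.
Definition elt_r (a : R) (b : ereal) : Prop :=
  match b with None => True | Some y => a < y end.

Definition proper_e d (g : vec d -> ereal) : Prop := exists u, g u <> None.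
Definition lsc_e d (g : vec d -> ereal) : Prop :=
  forall u a, elt_r a (g u) ->
  exists delta, 0 < delta /\ forall v, vnorm (vsub v u) < delta -> elt_r a (g v).

Definition rsum m n (r : forall j : 'I_m, vec (n j) -> ereal) (x : prodsp m n) : ereal :=
  \big[eadd/Some R0]_(j < m) r j (x j).
Definition Psi m n (f : prodsp m n -> R) r (x : prodsp m n) : ereal :=
  eadd (Some (f x)) (rsum r x).

Definition has_gradient m n (f : prodsp m n -> R) (gradf : prodsp m n -> prodsp m n) :=
  forall x eps, 0 < eps -> exists delta, 0 < delta /\
    forall h, hnorm h < delta ->
      Rabs (f (hadd x h) - f x - hinner (gradf x) h) <= eps * hnorm h.
Definition continuous_H m n (g : prodsp m n -> prodsp m n) :=
  forall x eps, 0 < eps -> exists delta, 0 < delta /\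
    forall y, hnorm (hsub y x) < delta -> hnorm (hsub (g y) (g x)) < eps.

Definition prox_bounded m n (r : forall j : 'I_m, vec (n j) -> ereal) (lam_r : R) :=
  0 < lam_r /\
  forall (x : prodsp m n) lam, 0 < lam <= lam_r ->
    exists y, forall y',
      ele (eadd (rsum r y) (Some (/(2*lam) * (hnorm (hsub x y))^2)))
          (eadd (rsum r y') (Some (/(2*lam) * (hnorm (hsub x y'))^2))).

(** |{h : k - tau <= h <= k, j_h = j}| (h ranging over the iteration indices). *)
Definition cnt_idx m (jseq : nat -> 'I_m) (tau : nat) (j : 'I_m) (k : nat) : nat :=
  count (fun h => jseq h == j) (iota (k - tau) (k - (k - tau)).+1).
Definition is_rho_tau m (jseq : nat -> 'I_m) (tau rho : nat) : Prop :=
  (forall j k, is_true (leq (cnt_idx jseq tau j k) rho)) /\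
  (exists j k, cnt_idx jseq tau j k = rho).

(** Delayed iterate x^{k-d_k}; negative indices are truncated to 0 (x^i = x^0). *)
Definition xdel m n (x : nat -> prodsp m n) (d : nat -> 'I_m -> nat) (k : nat) : prodsp m n :=
  fun j => x (k - d k j)%nat j.

Definition gam m n (L : 'I_m -> prodsp m n -> R) (c M lam_r : R) (rho tau : nat)
  (x : nat -> prodsp m n) (d : nat -> 'I_m -> nat) (k : nat) (j : 'I_m) : R :=
  Rmin (c / (L j (xdel x d k) + 2 * M * sqrt (INR rho * INR tau))) lam_r.

Definition Phi m n (f : prodsp m n -> R) r (M : R) (rho tau : nat)
  (z : nat -> prodsp m n) : ereal :=
  eadd (Psi f r (z 0%nat))
    (Some (M * sqrt (INR rho) / (2 * sqrt (INR tau)) *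
       \big[Rplus/R0]_(1 <= h < tau.+1)
          (INR (tau - h + 1) * (hnorm (hsub (z h) (z h.-1)))^2))).
Definition zseq m n (x : nat -> prodsp m n) (k : nat) : nat -> prodsp m n :=
  fun h => x (k - h)%nat.

(* Fix k, write j = j_k and D = x^{k+1}_j - x^k_j. The descent lemma for the
   block j bounds f(x^{k+1}) by f(x^k) + <grad_j f(x^k), D> + L_j/2 |D|^2, and
   comparing the prox step with the candidate u = x^k_j bounds r_j(x^{k+1}_j) by
   r_j(x^k_j) - <grad_j f(x^{k-d_k}), D> - |D|^2/(2 gamma). What remains is the
   delay error <grad_j f(x^k) - grad_j f(x^{k-d_k}), D>. Young's inequality with
   weight K = M sqrt(rho tau) and (A3) bound it by K/2 |D|^2 + M^2/(2K) |x^k - x^{k-d_k}|^2.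
   Each block of x^k - x^{k-d_k} is a sum of at most rho of the last tau one-block
   steps, so by Cauchy-Schwarz |x^k - x^{k-d_k}|^2 <= rho sum_{h=1}^tau |x^{k-h+1} - x^{k-h}|^2.
   This sum is exactly what the weighted tail of Phi loses when z^k is replaced by
   z^{k+1}, while it gains tau |D|^2; the weight M sqrt(rho)/(2 sqrt tau) balances
   both terms. *)

From HB Require Import structures.
From mathcomp Require Import all_boot zify.
From Stdlib Require Import Reals Lra Lia Psatz FunctionalExtensionality.
Open Scope R_scope.

HB.instance Definition _ := Monoid.isComLaw.Build R R0 Rplus
  (fun a b c => esym (Rplus_assoc a b c)) Rplus_comm Rplus_0_l.

Lemma sq_add_le_step (N S Q a : R) : 0 <= N -> 0 <= Q -> S * S <= N * Q ->
  (a + S) * (a + S) <= (N + 1) * (a * a + Q).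
Proof.
move=> N0 Q0 SQ; case: (Req_dec N 0) => [N_eq0|N_neq0].
  have -> : S = 0 by rewrite N_eq0 in SQ; nra.
  rewrite N_eq0; lra.
have cross : 2 * a * S <= N * (a * a) + Q.
  apply: (Rmult_le_reg_l N); first lra.
  have sq := Rle_0_sqr (N * a - S); rewrite /Rsqr in sq; nra.
nra.
Qed.

Section RealSums.
Context {I : Type}.
Implicit Types (s : seq I) (P : pred I) (F G : I -> R).

Lemma Rsum_le s P F G : (forall i, P i -> F i <= G i) ->
  \big[Rplus/R0]_(i <- s | P i) F i <= \big[Rplus/R0]_(i <- s | P i) G i.
Proof. exact: (big_ind2 Rle (Rle_refl 0) Rplus_le_compat). Qed.

Lemma Rsum_ge0 s P F : (forall i, P i -> 0 <= F i) ->
  0 <= \big[Rplus/R0]_(i <- s | P i) F i.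
Proof. exact: (big_ind (Rle 0) (Rle_refl 0) Rplus_le_le_0_compat). Qed.

Lemma Rsum_scale s P F c :
  \big[Rplus/R0]_(i <- s | P i) (c * F i) = c * \big[Rplus/R0]_(i <- s | P i) F i.
Proof.
by rewrite (big_morph (Rmult c) (Rmult_plus_distr_l c) (Rmult_0_r c)).
Qed.

Lemma Rsum_sub s P F G :
  \big[Rplus/R0]_(i <- s | P i) (F i - G i) =
  \big[Rplus/R0]_(i <- s | P i) F i - \big[Rplus/R0]_(i <- s | P i) G i.
Proof.
elim: s => [|a s IH]; rewrite ?big_nil ?big_cons; first ring.
by case: (P a); rewrite IH; ring.
Qed.

Lemma Rsum_le_mask s P F : (forall i, 0 <= F i) ->
  \big[Rplus/R0]_(i <- s | P i) F i <= \big[Rplus/R0]_(i <- s) F i.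
Proof.
move=> F0; rewrite big_mkcond; apply: Rsum_le => i _.
case: (P i); [exact: Rle_refl | exact: F0].
Qed.

Lemma Rsum_sq_le_size s F :
  (\big[Rplus/R0]_(i <- s) F i) * (\big[Rplus/R0]_(i <- s) F i)
  <= INR (size s) * \big[Rplus/R0]_(i <- s) (F i * F i).
Proof.
elim: s => [|a s IH]; rewrite ?big_nil ?big_cons.
  by rewrite Rmult_0_r; apply: Req_le; ring.
rewrite S_INR; apply: (sq_add_le_step _ _ _ _ (pos_INR _)) IH.
by apply: Rsum_ge0 => i _; apply: Rle_0_sqr.
Qed.

Lemma Rsum_sq_le_count s P F :
  (\big[Rplus/R0]_(i <- s | P i) F i) * (\big[Rplus/R0]_(i <- s | P i) F i)
  <= INR (count P s) * \big[Rplus/R0]_(i <- s | P i) (F i * F i).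
Proof. by rewrite -!(big_filter s) -size_filter; apply: Rsum_sq_le_size. Qed.
End RealSums.

Section Vectors.
Context {d : nat}.
Implicit Types (u v w : vec d).

Lemma vinner_ge0 u : 0 <= vinner u u.
Proof. by apply: Rsum_ge0 => i _; apply: Rle_0_sqr. Qed.

Lemma vnorm_sq u : vnorm u ^ 2 = vinner u u.
Proof. by rewrite /vnorm -Rsqr_pow2 Rsqr_sqrt //; apply: vinner_ge0. Qed.

Lemma vinner_eq0r u w : (forall i, w i = 0) -> vinner u w = 0.
Proof. by move=> w0; rewrite /vinner big1 // => i _; rewrite w0 Rmult_0_r. Qed.

Lemma vinner_vsubxx u w : vinner u (vsub w w) = 0.
Proof. by apply: vinner_eq0r => i; rewrite /vsub Rminus_diag. Qed.

Lemma vnorm_vsubxx w : vnorm (vsub w w) = 0.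
Proof. by rewrite /vnorm vinner_vsubxx sqrt_0. Qed.

Lemma vnorm_vsubC u v : vnorm (vsub u v) = vnorm (vsub v u).
Proof. by congr sqrt; apply: eq_bigr => i _; rewrite /vsub; ring. Qed.

Lemma vinner_vsubl u v w : vinner (vsub u v) w = vinner u w - vinner v w.
Proof. by rewrite /vinner -Rsum_sub; apply: eq_bigr => i _; rewrite /vsub; ring. Qed.

Lemma vinner_scaler u w h : vinner u (fun i => h * w i) = h * vinner u w.
Proof. by rewrite /vinner -Rsum_scale; apply: eq_bigr => i _; ring. Qed.

Lemma vnorm_scale w h : vnorm (fun i => h * w i) = Rabs h * vnorm w.
Proof.
rewrite /vnorm.
have -> : vinner (fun i => h * w i) (fun i => h * w i) = h ^ 2 * vinner w w.
  by rewrite /vinner -Rsum_scale; apply: eq_bigr => i _; ring.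
rewrite sqrt_mult_alt; last exact: pow2_ge_0.
by rewrite -Rsqr_pow2 sqrt_Rsqr_abs.
Qed.

Lemma vinner_young u v t : 0 < t ->
  vinner u v <= / (2 * t) * vinner u u + t / 2 * vinner v v.
Proof.
move=> t_gt0; rewrite /vinner -!Rsum_scale -big_split /=; apply: Rsum_le => i _.
have sq_ge0 : 0 <= / (2 * t) * (u i - t * v i) ^ 2.
  by apply: Rmult_le_pos; [apply/Rlt_le/Rinv_0_lt_compat; lra | apply: pow2_ge_0].
have sq_eq : / (2 * t) * (u i - t * v i) ^ 2
             = / (2 * t) * (u i * u i) + t / 2 * (v i * v i) - u i * v i by field; lra.
lra.
Qed.

Lemma vinner_le_of_vnorm_le u v K : 0 < K -> vnorm u <= K * vnorm v ->
  vinner u v <= K * vnorm v ^ 2.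
Proof.
move=> K_gt0 uv; apply: (Rle_trans _ _ _ (vinner_young u v _ K_gt0)).
rewrite -!vnorm_sq.
have u0 : 0 <= vnorm u by apply: sqrt_pos.
have sq_le : vnorm u ^ 2 <= K ^ 2 * vnorm v ^ 2 by nra.
have -> : K * vnorm v ^ 2 = / (2 * K) * (K ^ 2 * vnorm v ^ 2) + K / 2 * vnorm v ^ 2.
  by field; lra.
have iK : 0 < / (2 * K) by apply: Rinv_0_lt_compat; lra.
nra.
Qed.
End Vectors.

Section ProductSpace.
Context {m : nat} {n : 'I_m -> nat}.
Implicit Types (x y h : prodsp m n).

Definition hzero : prodsp m n := fun j i => 0.

Lemma upd_eq x j u : upd x j u j = u.
Proof. by rewrite /upd; case: eqP => // e; rewrite (eq_irrelevance e erefl). Qed.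

Lemma upd_neq x j u j' : j' <> j -> upd x j u j' = x j'.
Proof. by rewrite /upd; case: eqP => // e /(_ (esym e)). Qed.

Lemma upd_agree x y j : (forall j', j' <> j -> y j' = x j') -> upd x j (y j) = y.
Proof.
move=> xy; apply: functional_extensionality_dep => j'.
by case: (eqVneq j' j) => [->|/eqP ne]; rewrite ?upd_eq // upd_neq // xy.
Qed.

Lemma upd_id x j : upd x j (x j) = x.
Proof. exact: upd_agree. Qed.

Lemma hadd_upd x j u w :
  hadd (upd x j u) (upd hzero j w) = upd x j (fun i => u i + w i).
Proof.
apply: functional_extensionality_dep => j'; rewrite /hadd.
case: (eqVneq j' j) => [->|/eqP ne]; first by rewrite !upd_eq.
by rewrite !upd_neq //; apply: functional_extensionality => i; rewrite Rplus_0_r.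
Qed.

Lemma hinner_ge0 h : 0 <= hinner h h.
Proof. by apply: Rsum_ge0 => j _; apply: vinner_ge0. Qed.

Lemma hnorm_sq h : hnorm h ^ 2 = hinner h h.
Proof. by rewrite /hnorm -Rsqr_pow2 Rsqr_sqrt //; apply: hinner_ge0. Qed.

Lemma hinner_block x h j : (forall j', j' <> j -> forall i, h j' i = 0) ->
  hinner x h = vinner (x j) (h j).
Proof.
move=> h0; rewrite /hinner (bigD1 j) //= big1 ?Rplus_0_r // => j' /eqP ne.
exact/vinner_eq0r/h0.
Qed.

Lemma hinner_upd0 x j u : hinner x (upd hzero j u) = vinner (x j) u.
Proof. by rewrite (hinner_block _ _ j) ?upd_eq // => j' ne i; rewrite upd_neq. Qed.

Lemma hnorm_upd0 j u : hnorm (upd hzero j u) = vnorm u.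
Proof. by rewrite /hnorm hinner_upd0 upd_eq. Qed.
End ProductSpace.

Section BlockDescent.
Context {m : nat} {n : 'I_m -> nat} {f : prodsp m n -> R} {gradf : prodsp m n -> prodsp m n}.
Hypothesis Hgrad : has_gradient f gradf.

Lemma derivable_pt_lim_block_line y j (v w : vec (n j)) t :
  derivable_pt_lim (fun t => f (upd y j (fun i => v i + t * w i))) t
    (vinner (gradf (upd y j (fun i => v i + t * w i)) j) w).
Proof.
move=> eps eps_gt0.
set p := upd y j (fun i => v i + t * w i).
set Nw := vnorm w.
have Nw0 : 0 <= Nw by apply: sqrt_pos.
have Nw1_gt0 : 0 < Nw + 1 by lra.
have [del [del_gt0 Hdel]] := Hgrad p _ (Rdiv_lt_0_compat _ _ eps_gt0 Nw1_gt0).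
have step_gt0 : 0 < del / (Nw + 1) by apply: Rdiv_lt_0_compat; lra.
exists (mkposreal _ step_gt0) => h h_neq0 /= h_small.
have h_gt0 : 0 < Rabs h by apply: Rabs_pos_lt.
have -> : upd y j (fun i => v i + (t + h) * w i) = hadd p (upd hzero j (fun i => h * w i)).
  by rewrite /p hadd_upd; congr upd; apply: functional_extensionality => i; ring.
have hw_small : hnorm (upd hzero j (fun i => h * w i)) < del.
  have del_eq : del = del / (Nw + 1) * (Nw + 1) by field; lra.
  rewrite hnorm_upd0 vnorm_scale -/Nw del_eq; nra.
have := Hdel _ hw_small.
rewrite hnorm_upd0 vnorm_scale hinner_upd0 vinner_scaler -/Nw.
set A := f (hadd p _) - f p; set l := vinner (gradf p j) w => A_le.
have -> : A / h - l = (A - h * l) * / h by field.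
rewrite Rabs_mult Rabs_inv.
apply: (Rle_lt_trans _ (eps / (Nw + 1) * (Rabs h * Nw) * / Rabs h)).
  by apply: Rmult_le_compat_r => //; apply/Rlt_le/Rinv_0_lt_compat.
have -> : eps / (Nw + 1) * (Rabs h * Nw) * / Rabs h = eps * (Nw / (Nw + 1)) by field; lra.
have -> : Nw / (Nw + 1) = 1 - / (Nw + 1) by field; lra.
have := Rinv_0_lt_compat _ Nw1_gt0; nra.
Qed.

Lemma block_descent (L : R) y j (u v : vec (n j)) : 0 < L ->
  (forall a b : vec (n j),
     vnorm (vsub (gradf (upd y j a) j) (gradf (upd y j b) j)) <= L * vnorm (vsub a b)) ->
  f (upd y j u) <= f (upd y j v) + vinner (gradf (upd y j v) j) (vsub u v)
                   + L / 2 * vnorm (vsub u v) ^ 2.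
Proof.
move=> L_gt0 HL.
set w := vsub u v; set W := vnorm w ^ 2.
pose p t := upd y j (fun i => v i + t * w i).
have p0 : p 0 = upd y j v.
  by rewrite /p; congr upd; apply: functional_extensionality => i; ring.
have p1 : p 1 = upd y j u.
  by rewrite /p; congr upd; apply: functional_extensionality => i; rewrite /w /vsub; ring.
set l0 := vinner (gradf (upd y j v) j) w.
(* [psi] is nonincreasing on [0, 1] because the block gradient is L-Lipschitz. *)
pose psi t := f (p t) - t * l0 - L / 2 * W * (t * t).
pose dpsi t := vinner (gradf (p t) j) w - l0 - L * W * t.
have psi_deriv t : derivable_pt_lim psi t (dpsi t).
  have := derivable_pt_lim_minus _ _ _ _ _
    (derivable_pt_lim_minus _ _ _ _ _ (derivable_pt_lim_block_line y j v w t)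
       (derivable_pt_lim_scal id l0 t 1 (derivable_pt_lim_id t)))
    (derivable_pt_lim_scal _ (L / 2 * W) t _
       (derivable_pt_lim_mult id id t 1 1 (derivable_pt_lim_id t) (derivable_pt_lim_id t))).
  set F := (X in derivable_pt_lim X _ _).
  have -> : F = psi.
    apply: functional_extensionality => s.
    by rewrite /F /psi /minus_fct /mult_real_fct /mult_fct /id /p; ring.
  by congr (derivable_pt_lim _ _); rewrite /dpsi /id /p; lra.
have dpsi_le0 t : 0 < t -> dpsi t <= 0.
  move=> t_gt0; rewrite /dpsi /l0 -p0 -vinner_vsubl.
  suff : vinner (vsub (gradf (p t) j) (gradf (p 0) j)) w <= L * t * W by lra.
  apply: vinner_le_of_vnorm_le; first nra.
  have := HL (fun i => v i + t * w i) (fun i => v i + 0 * w i).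
  have -> : vsub (fun i => v i + t * w i) (fun i => v i + 0 * w i) = (fun i => t * w i).
    by apply: functional_extensionality => i; rewrite /vsub; ring.
  by rewrite vnorm_scale Rabs_pos_eq ?Rmult_assoc //; lra.
have [c [psi_diff [c_gt0 _]]] := MVT_cor2 psi dpsi 0 1 Rlt_0_1 (fun t _ => psi_deriv t).
have : psi 1 <= psi 0 by have := dpsi_le0 c c_gt0; nra.
by rewrite /psi p0 p1 /l0 /W; lra.
Qed.
End BlockDescent.

Lemma Rsum_iota_le (F : nat -> R) (a s t : nat) : (s <= t)%nat -> (forall h, 0 <= F h) ->
  \big[Rplus/R0]_(h <- iota a s) F h <= \big[Rplus/R0]_(h <- iota a t) F h.
Proof.
move=> st F0; rewrite -(subnKC st) iotaD big_cat /=.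
have := Rsum_ge0 (iota (a + s) (t - s)) xpredT F (fun h _ => F0 h); lra.
Qed.

Lemma count_iota_le (P : pred nat) (a s t : nat) : (s <= t)%nat ->
  (count P (iota a s) <= count P (iota a t))%nat.
Proof. by move=> st; rewrite -(subnKC st) iotaD count_cat leq_addr. Qed.

(* Through h |-> k - h, the steps h <= k back from k fall into the window
   [k - t, k] that [cnt_idx] counts. *)
Lemma count_window (Q : pred nat) k t :
  (count (fun h => (h <= k)%nat && Q (k - h)%nat) (iota 1 t) <=
   count Q (iota (k - t) (k - (k - t)).+1))%nat.
Proof.
elim: t => [|t IH] //.
rewrite (_ : iota 1 t.+1 = iota 1 t ++ [:: t.+1]); last first.
  by rewrite -(addn1 t) iotaD add1n addn1.
rewrite count_cat /= addn0.
case: (leqP t.+1 k) => t_lt.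
- rewrite (_ : k - (k - t.+1) = (k - (k - t)).+1)%nat; last lia.
  rewrite (_ : k - t.+1 = (k - t).-1)%nat; last lia.
  rewrite /= (_ : (k - t).-1.+1 = k - t)%nat; last lia.
  rewrite /= in IH; lia.
- rewrite (_ : k - t.+1 = 0)%nat; last lia.
  by move: IH; rewrite (_ : k - t = 0)%nat /=; lia.
Qed.

Section Lyapunov.
Context {m : nat} {n : 'I_m -> nat}.
Implicit Types (x : nat -> prodsp m n).

Definition lag_sq x k h := hnorm (hsub (zseq x k h) (zseq x k h.-1)) ^ 2.

Definition lyap_sum x tau k :=
  \big[Rplus/R0]_(1 <= h < tau.+1) (INR (tau - h + 1) * lag_sq x k h).

Definition lyap_weight M rho tau := M * sqrt (INR rho) / (2 * sqrt (INR tau)).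

Lemma lyap_weight_ge0 M rho tau : 0 <= M -> (1 <= tau)%nat -> 0 <= lyap_weight M rho tau.
Proof.
move=> M_ge0 tau_ge1; have tau_gt0 : 0 < INR tau by apply: (lt_INR 0); apply/ltP.
apply: Rmult_le_pos; first by apply: Rmult_le_pos => //; apply: sqrt_pos.
by apply/Rlt_le/Rinv_0_lt_compat; have := sqrt_lt_R0 _ tau_gt0; lra.
Qed.

Lemma lyap_weight_tau M rho tau : (1 <= tau)%nat ->
  lyap_weight M rho tau * INR tau = M * sqrt (INR rho * INR tau) / 2.
Proof.
move=> tau_ge1; have tau_gt0 : 0 < INR tau by apply: (lt_INR 0); apply/ltP.
have := sqrt_lt_R0 _ tau_gt0; have := sqrt_sqrt _ (Rlt_le _ _ tau_gt0).
rewrite /lyap_weight sqrt_mult; [|exact: pos_INR|exact: pos_INR].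
set b := sqrt (INR tau) => tau_sq b_gt0.
by rewrite -tau_sq; field; lra.
Qed.

Lemma lyap_weight_young M rho tau : 0 < M -> (1 <= rho)%nat -> (1 <= tau)%nat ->
  / (2 * (M * sqrt (INR rho * INR tau))) * (M ^ 2 * INR rho) = lyap_weight M rho tau.
Proof.
move=> M_gt0 rho_ge1 tau_ge1.
have rho_gt0 : 0 < INR rho by apply: (lt_INR 0); apply/ltP.
have tau_gt0 : 0 < INR tau by apply: (lt_INR 0); apply/ltP.
have := sqrt_lt_R0 _ rho_gt0; have := sqrt_sqrt _ (Rlt_le _ _ rho_gt0).
have := sqrt_lt_R0 _ tau_gt0.
rewrite /lyap_weight sqrt_mult; [|lra|lra].
set a := sqrt (INR rho); set b := sqrt (INR tau) => b_gt0 rho_sq a_gt0.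
by rewrite -rho_sq; field; lra.
Qed.

Lemma Phi_zseq f r M rho tau x k :
  Phi f r M rho tau (zseq x k) =
  eadd (Psi f r (x k)) (Some (lyap_weight M rho tau * lyap_sum x tau k)).
Proof. by rewrite /Phi /zseq subn0. Qed.

Lemma lyap_sum_ge0 x tau k : 0 <= lyap_sum x tau k.
Proof.
by apply: Rsum_ge0 => h _; apply: Rmult_le_pos; [apply: pos_INR | apply: pow2_ge_0].
Qed.

Lemma lyap_sum0 x tau : lyap_sum x tau 0 = 0.
Proof.
rewrite /lyap_sum big1_seq // => h _.
rewrite /lag_sq /zseq !sub0n /hnorm (_ : hinner _ _ = 0) ?sqrt_0; first ring.
by rewrite /hinner big1 // => j _; apply: vinner_eq0r => i; rewrite /hsub Rminus_diag.
Qed.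

Lemma lag_sq_succ x k h : (1 <= h)%nat -> lag_sq x k.+1 h.+1 = lag_sq x k h.
Proof.
by move=> h_ge1; rewrite /lag_sq /zseq subSS (_ : k.+1 - h = k - h.-1)%nat //; lia.
Qed.

Lemma lyap_sum_succ x tau k : (1 <= tau)%nat ->
  lyap_sum x tau k.+1 =
  lyap_sum x tau k + INR tau * lag_sq x k.+1 1 - \big[Rplus/R0]_(1 <= h < tau.+1) lag_sq x k h.
Proof.
move=> tau_ge1; rewrite /lyap_sum.
rewrite big_nat_recl // big_nat_recr // [X in _ = _ + _ - X]big_nat_recr //.
rewrite (_ : tau - 1 + 1 = tau)%nat; last lia.
rewrite (_ : tau - tau + 1 = 1)%nat; last lia.
rewrite (@eq_big_nat _ _ _ 1 tau (fun h => INR (tau - h.+1 + 1) * lag_sq x k.+1 h.+1)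
           (fun h => INR (tau - h) * lag_sq x k h)); last first.
  move=> h /andP [h_ge1 h_lt]; rewrite lag_sq_succ // (_ : tau - h.+1 + 1 = tau - h)%nat //.
  lia.
rewrite (@eq_big_nat _ _ _ 1 tau (fun h => INR (tau - h + 1) * lag_sq x k h)
           (fun h => INR (tau - h) * lag_sq x k h + lag_sq x k h)); last first.
  by move=> h _; rewrite plus_INR INR_1; ring.
rewrite big_split /=; ring.
Qed.
End Lyapunov.

Section DelayedIterates.
Context {m : nat} {n : 'I_m -> nat} (x : nat -> prodsp m n) (jseq : nat -> 'I_m).
Hypothesis Hother : forall k j, j <> jseq k -> x k.+1 j = x k j.

(* Truncated subtraction in [k - h] realises the convention x^i = x^0 for i <= 0. *)
Definition lag_incr k j h : vec (n j) := vsub (x (k - h)%nat j) (x (k - h.-1)%nat j).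

Lemma Rsum_lag_incr k j dd i :
  \big[Rplus/R0]_(h <- iota 1 dd) lag_incr k j h i = x (k - dd)%nat j i - x k j i.
Proof.
elim: dd => [|dd IH]; first by rewrite big_nil subn0; ring.
rewrite -(addn1 dd) iotaD big_cat [iota _ 1]/= big_seq1 IH /lag_incr /vsub.
by rewrite add1n addn1 (_ : dd.+1.-1 = dd)%nat // [LHS]/=; ring.
Qed.

Lemma lag_incr_eq0 k j h i :
  ~~ ((h <= k)%nat && (jseq (k - h)%nat == j)) -> lag_incr k j h i = 0.
Proof.
move=> no_update; rewrite /lag_incr /vsub.
have [h_le|h_gt] := leqP h k; last first.
  rewrite (_ : k - h = 0)%nat; last lia.
  rewrite (_ : k - h.-1 = 0)%nat; last lia.
  exact: Rminus_diag.
case: h h_le no_update => [|h] h_le no_update; first by rewrite subn0 Rminus_diag.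
rewrite (_ : k - h.+1.-1 = (k - h.+1).+1)%nat; last lia.
rewrite Hother ?Rminus_diag // => e.
by move: no_update; rewrite h_le e eqxx.
Qed.

Lemma lag_coord_bound k j dd tau rho i : (dd <= tau)%nat ->
  (count (fun h => (h <= k)%nat && (jseq (k - h)%nat == j)) (iota 1 tau) <= rho)%nat ->
  (x k j i - x (k - dd)%nat j i) * (x k j i - x (k - dd)%nat j i)
  <= INR rho * \big[Rplus/R0]_(h <- iota 1 tau) (lag_incr k j h i * lag_incr k j h i).
Proof.
move=> dd_le cnt_le; set P := fun h => _ && _ in cnt_le.
have sum_eq : \big[Rplus/R0]_(h <- iota 1 dd | P h) lag_incr k j h i = x (k - dd)%nat j i - x k j i.
  by rewrite big_rmcond ?Rsum_lag_incr // => h; apply: lag_incr_eq0.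
have -> : (x k j i - x (k - dd)%nat j i) * (x k j i - x (k - dd)%nat j i)
          = (\big[Rplus/R0]_(h <- iota 1 dd | P h) lag_incr k j h i)
            * (\big[Rplus/R0]_(h <- iota 1 dd | P h) lag_incr k j h i) by rewrite sum_eq; ring.
apply: (Rle_trans _ _ _ (Rsum_sq_le_count _ _ _)).
apply: Rmult_le_compat; first exact: pos_INR.
- by apply: Rsum_ge0 => h _; apply: Rle_0_sqr.
- by apply/le_INR/leP; apply: leq_trans cnt_le; apply: count_iota_le.
apply: (Rle_trans _ _ _ (Rsum_le_mask _ _ _ (fun h => Rle_0_sqr _))).
by apply: Rsum_iota_le => // h; apply: Rle_0_sqr.
Qed.

Lemma lag_block_bound k j dd tau rho : (dd <= tau)%nat ->
  (count (fun h => (h <= k)%nat && (jseq (k - h)%nat == j)) (iota 1 tau) <= rho)%nat ->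
  vinner (vsub (x k j) (x (k - dd)%nat j)) (vsub (x k j) (x (k - dd)%nat j))
  <= INR rho * \big[Rplus/R0]_(h <- iota 1 tau) vinner (lag_incr k j h) (lag_incr k j h).
Proof.
move=> dd_le cnt_le; rewrite /vinner exchange_big /= -Rsum_scale.
by apply: Rsum_le => i _; apply: lag_coord_bound.
Qed.

Lemma delayed_dist_bound d k tau rho : (forall j, d k j <= tau)%nat ->
  (forall j, cnt_idx jseq tau j k <= rho)%nat ->
  hnorm (hsub (x k) (xdel x d k)) ^ 2
  <= INR rho * \big[Rplus/R0]_(1 <= h < tau.+1) lag_sq x k h.
Proof.
move=> d_le cnt_le; rewrite hnorm_sq /hinner.
apply: (Rle_trans _ (\big[Rplus/R0]_(j < m) (INR rho *
   \big[Rplus/R0]_(h <- iota 1 tau) vinner (lag_incr k j h) (lag_incr k j h)))).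
  apply: Rsum_le => j _; apply: lag_block_bound => //.
  exact: leq_trans (count_window (fun i => jseq i == j) k tau) (cnt_le j).
rewrite Rsum_scale exchange_big /index_iota subSS subn0.
by apply/Rmult_le_compat_l/Req_le; [apply: pos_INR | apply: eq_bigr => h _; rewrite /lag_sq hnorm_sq].
Qed.

Lemma lag_sq_step k : lag_sq x k.+1 1 = vnorm (vsub (x k.+1 (jseq k)) (x k (jseq k))) ^ 2.
Proof.
rewrite /lag_sq /zseq subSS !subn0 hnorm_sq vnorm_vsubC vnorm_sq.
by apply: hinner_block => j' ne i; rewrite /hsub Hother ?Rminus_diag.
Qed.
End DelayedIterates.

Lemma is_rho_tau_ge1 {m} {jseq : nat -> 'I_m} {tau rho : nat} :
  is_rho_tau jseq tau rho -> (1 <= rho)%nat.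
Proof.
by case=> cnt_le _; apply: leq_trans (cnt_le (jseq 0%nat) 0%nat); rewrite /cnt_idx sub0n /= eqxx.
Qed.

Lemma gam_gt0 {m n} (L : 'I_m -> prodsp m n -> R) c M lam_r rho tau x d k j :
  (forall j y, 0 < L j y) -> 0 < c -> 0 <= M -> 0 < lam_r ->
  0 < gam L c M lam_r rho tau x d k j.
Proof.
move=> L_gt0 c_gt0 M_ge0 lam_gt0; apply: Rmin_pos => //; apply: Rdiv_lt_0_compat => //.
have := L_gt0 j (xdel x d k); have := sqrt_pos (INR rho * INR tau); nra.
Qed.

Section AsyncPALMStep.
Context {m : nat} {n : 'I_m -> nat} {f : prodsp m n -> R} {gradf : prodsp m n -> prodsp m n}
  {L : 'I_m -> prodsp m n -> R} {x : nat -> prodsp m n} {jseq : nat -> 'I_m}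
  {d : nat -> 'I_m -> nat} {tau rho : nat} {M : R}.
Hypothesis Hgrad : has_gradient f gradf.
Hypothesis HLpos : forall j y, 0 < L j y.
Hypothesis HLip : forall j y (u v : vec (n j)),
  vnorm (vsub (gradf (upd y j u) j) (gradf (upd y j v) j)) <= L j y * vnorm (vsub u v).
Hypothesis Hother : forall k j, j <> jseq k -> x k.+1 j = x k j.
Hypothesis HA3 : forall k,
  vnorm (vsub (gradf (x k) (jseq k)) (gradf (xdel x d k) (jseq k)))
  <= M * hnorm (hsub (x k) (xdel x d k)).
Hypothesis Hd : forall k j, (d k j <= tau)%nat.
Hypothesis Hcnt : forall j k, (cnt_idx jseq tau j k <= rho)%nat.
Hypothesis Htau : (1 <= tau)%nat.
Hypothesis Hrho : (1 <= rho)%nat.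
Hypothesis HM : 0 < M.

Lemma delayed_gradient_error k :
  vinner (vsub (gradf (x k) (jseq k)) (gradf (xdel x d k) (jseq k)))
         (vsub (x k.+1 (jseq k)) (x k (jseq k)))
  <= lyap_weight M rho tau * \big[Rplus/R0]_(1 <= h < tau.+1) lag_sq x k h
     + M * sqrt (INR rho * INR tau) / 2 * vnorm (vsub (x k.+1 (jseq k)) (x k (jseq k))) ^ 2.
Proof.
have rho_gt0 : 0 < INR rho by apply: (lt_INR 0); apply/ltP.
have tau_gt0 : 0 < INR tau by apply: (lt_INR 0); apply/ltP.
have K_gt0 : 0 < M * sqrt (INR rho * INR tau).
  by apply/Rmult_lt_0_compat/sqrt_lt_R0/Rmult_lt_0_compat.
apply: (Rle_trans _ _ _ (vinner_young _ _ _ K_gt0)); rewrite -!vnorm_sq.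
apply: Rplus_le_compat_r.
rewrite -(lyap_weight_young M rho tau HM Hrho Htau) Rmult_assoc.
apply: Rmult_le_compat_l; first by apply/Rlt_le/Rinv_0_lt_compat; lra.
apply: (Rle_trans _ (M ^ 2 * hnorm (hsub (x k) (xdel x d k)) ^ 2)).
  by rewrite -Rpow_mult_distr; apply: pow_incr; split; [apply: sqrt_pos | exact: HA3].
rewrite Rmult_assoc; apply: Rmult_le_compat_l; first exact: pow2_ge_0.
exact: (delayed_dist_bound x jseq Hother d k tau rho (Hd k) (fun j => Hcnt j k)).
Qed.

Lemma lyap_smooth_step k :
  f (x k.+1) + lyap_weight M rho tau * lyap_sum x tau k.+1
  <= f (x k) + lyap_weight M rho tau * lyap_sum x tau k
     + vinner (gradf (xdel x d k) (jseq k)) (vsub (x k.+1 (jseq k)) (x k (jseq k)))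
     + (L (jseq k) (x k) / 2 + M * sqrt (INR rho * INR tau))
       * vnorm (vsub (x k.+1 (jseq k)) (x k (jseq k))) ^ 2.
Proof.
have descent := block_descent Hgrad _ (x k) (jseq k) (x k.+1 (jseq k)) (x k (jseq k))
                  (HLpos (jseq k) (x k)) (HLip (jseq k) (x k)).
rewrite upd_agree ?upd_id in descent; last by move=> j; apply: Hother.
have err := delayed_gradient_error k.
rewrite vinner_vsubl in err.
rewrite lyap_sum_succ // (lag_sq_step x jseq Hother).
have weight_tau := lyap_weight_tau M rho tau Htau.
set w := lyap_weight M rho tau in err *.
set Q := vnorm _ ^ 2 in descent err *.
set SE := \big[Rplus/R0]_(1 <= h < tau.+1) lag_sq x k h in err *.
have expand : w * (lyap_sum x tau k + INR tau * Q - SE)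
              = w * lyap_sum x tau k + w * INR tau * Q - w * SE by ring.
rewrite expand weight_tau; lra.
Qed.
End AsyncPALMStep.

Lemma addeA : associative eadd.
Proof. by case=> [a|] [b|] [c|] //=; rewrite Rplus_assoc. Qed.

Lemma addeC : commutative eadd.
Proof. by case=> [a|] [b|] //=; rewrite Rplus_comm. Qed.

Lemma add0e : left_id (Some R0) eadd.
Proof. by case=> [a|] //=; rewrite Rplus_0_l. Qed.

HB.instance Definition _ := Monoid.isComLaw.Build ereal (Some R0) eadd addeA addeC add0e.

Lemma adde0 (a : ereal) : eadd a (Some 0) = a.
Proof. by case: a => [a|] //=; rewrite Rplus_0_r. Qed.

Lemma ele_adde_nonneg (a : ereal) c : 0 <= c -> ele a (eadd a (Some c)).
Proof. by case: a => [a|] //= c_ge0; lra. Qed.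

Lemma rsum_agree {m n} (r : forall j : 'I_m, vec (n j) -> ereal) (y y' : prodsp m n) j :
  (forall j', j' <> j -> y' j' = y j') ->
  exists rest, rsum r y = eadd (r j (y j)) rest /\ rsum r y' = eadd (r j (y' j)) rest.
Proof.
move=> agree; exists (\big[eadd/Some R0]_(j' < m | j' != j) r j' (y j')).
rewrite /rsum; split; rewrite (bigD1 j) //.
by congr eadd; apply: eq_bigr => j' /eqP ne; rewrite agree.
Qed.

Lemma ele_adde_transfer {a b rest : ereal} {f1 fk w1 wk e p q : R} :
  ele (eadd a (Some p)) (eadd b (Some q)) -> f1 + w1 + e + q <= fk + wk + p ->
  ele (eadd (eadd (eadd (Some f1) (eadd a rest)) (Some w1)) (Some e))
      (eadd (eadd (Some fk) (eadd b rest)) (Some wk)).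
Proof. by case: a b rest => [a|] [b|] [c|] //= ab le; lra. Qed.

Theorem mainTheorem4
  (m : nat) (n : 'I_m -> nat)
  (f : prodsp m n -> R) (gradf : prodsp m n -> prodsp m n)
  (r : forall j : 'I_m, vec (n j) -> ereal) (lam_r : R)
  (L : 'I_m -> prodsp m n -> R)
  (tau : nat) (d : nat -> 'I_m -> nat)
  (c M : R) (jseq : nat -> 'I_m) (rho : nat)
  (x : nat -> prodsp m n)
  (Hgrad : has_gradient f gradf) (Hcont : continuous_H gradf)
  (Hr_proper : forall j, proper_e (r j)) (Hr_lsc : forall j, lsc_e (r j))
  (Hbdd : exists b : R, forall y, ele (Some b) (Psi f r y))
  (Hprox : prox_bounded r lam_r)
  (* L j y plays L_j(y_{-j}) *)
  (HLpos : forall j y, 0 < L j y)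
  (HLind : forall j y (u : vec (n j)), L j (upd y j u) = L j y)
  (HLip : forall j y (u v : vec (n j)),
      vnorm (vsub (gradf (upd y j u) j) (gradf (upd y j v) j))
        <= L j y * vnorm (vsub u v))
  (Htau : is_true (leq 1 tau)) (Hd : forall k j, is_true (leq (d k j) tau))
  (Hc : 0 < c < 1) (HM : 0 < M)
  (Hrho : is_rho_tau jseq tau rho)
  (* the Deterministic Asynchronous PALM iteration *)
  (Hstep : forall k (u : vec (n (jseq k))),
      ele (eadd (r (jseq k) (x k.+1 (jseq k)))
                (Some (vinner (gradf (xdel x d k) (jseq k))
                              (vsub (x k.+1 (jseq k)) (x k (jseq k)))
                       + / (2 * gam L c M lam_r rho tau x d k (jseq k))
                         * (vnorm (vsub (x k.+1 (jseq k)) (x k (jseq k))))^2)))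
          (eadd (r (jseq k) u)
                (Some (vinner (gradf (xdel x d k) (jseq k)) (vsub u (x k (jseq k)))
                       + / (2 * gam L c M lam_r rho tau x d k (jseq k))
                         * (vnorm (vsub u (x k (jseq k))))^2))))
  (Hother : forall k j, j <> jseq k -> x k.+1 j = x k j)
  (* (A3) *)
  (HA3 : forall k,
      vnorm (vsub (gradf (x k) (jseq k)) (gradf (xdel x d k) (jseq k)))
        <= M * hnorm (hsub (x k) (xdel x d k))) :
  (forall k : nat,
      ele (eadd (Phi f r M rho tau (zseq x k.+1))
                (Some (/ 2 * (/ gam L c M lam_r rho tau x d k (jseq k)
                              - L (jseq k) (x k)
                              - 2 * M * sqrt (INR rho * INR tau))
                       * (vnorm (vsub (x k.+1 (jseq k)) (x k (jseq k))))^2)))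
          (Phi f r M rho tau (zseq x k)))
  /\ (forall k : nat, ele (Psi f r (x k)) (Phi f r M rho tau (zseq x k)))
  /\ Phi f r M rho tau (zseq x 0%nat) = Psi f r (x 0%nat).
Proof.
have lam_gt0 : 0 < lam_r by case: Hprox.
have [cnt_le _] := Hrho.
split; [|split].
- move=> k.
  have [rest [rsum_k rsum_k1]] := rsum_agree r (x k) (x k.+1) (jseq k) (Hother k).
  have prox := Hstep k (x k (jseq k)).
  rewrite vinner_vsubxx vnorm_vsubxx in prox.
  have smooth := lyap_smooth_step Hgrad HLpos HLip Hother HA3 Hd cnt_le Htau
                   (is_rho_tau_ge1 Hrho) HM k.
  have g_gt0 := gam_gt0 L c M lam_r rho tau x d k (jseq k) HLpos (proj1 Hc) (Rlt_le _ _ HM) lam_gt0.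
  rewrite !Phi_zseq /Psi rsum_k rsum_k1; apply: (ele_adde_transfer prox).
  set g := gam _ _ _ _ _ _ _ _ _ _ in g_gt0 *.
  set Q := vnorm _ ^ 2 in smooth *.
  have coef : / 2 * (/ g - L (jseq k) (x k) - 2 * M * sqrt (INR rho * INR tau)) * Q
              = / (2 * g) * Q - (L (jseq k) (x k) / 2 + M * sqrt (INR rho * INR tau)) * Q.
    by field; lra.
  rewrite coef; lra.
- move=> k; rewrite Phi_zseq; apply/ele_adde_nonneg/Rmult_le_pos.
    exact: lyap_weight_ge0 (Rlt_le _ _ HM) Htau.
  exact: lyap_sum_ge0.
- by rewrite Phi_zseq lyap_sum0 Rmult_0_r adde0.
Qed.
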